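(* Let $p\in[0,1]^n$ and $k\in\mathbb N$, and let $\bar X_1,\dots,\bar X_k\in\{0,1\}^n$ be independent random vectors, each having independent entries with $\Pr((\bar X_l)_i=1)=p_i$. Let $f$ be the objective function of the binary integer program below and $x^*\in\{0,1\}^n$ an optimizer of it, fix $\delta>0$, let $\mu:=\mathbb E_{x\sim p}[\|x-x^*\|_1]$ (where $x\sim p$ means $x$ has independent Bernoulli$(p_i)$ entries), and let $L_f$ be the Lipschitz constant of $f$ with respect to the $1$-norm. If $\mu\le\delta/L_f$, then \[\psi(p,k):=\Pr\big(\exists\,l\in[k]:\ f(\bar X_l)\le f(x^* )+\delta\big)\ge1-\exp\!\left(k\left(\frac{\delta}{L_f}\Big(1-\log\frac{\delta}{\mu L_f}\Big)-\mu\right)\right).\]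
   Context: The binary integer program is $\min_{x\in\{0,1\}^n} f(x):=\langle x,Qx\rangle+\langle c,x\rangle$ subject to $Ax\ge b$ and $Bx=d$, with $Q\in\mathbb R^{n\times n}$, $c\in\mathbb R^n$, $A\in\mathbb R^{m_1\times n}$, $b\in\mathbb R^{m_1}$, $B\in\mathbb R^{m_2\times n}$, $d\in\mathbb R^{m_2}$. $[k]=\{1,\dots,k\}$. *)

From HB Require Import structures.
From mathcomp Require Import all_boot all_order all_algebra.
From mathcomp Require Import reals sequences exp.
Set Implicit Arguments. Unset Strict Implicit. Unset Printing Implicit Defensive.
Import Order.TTheory GRing.Theory Num.Theory.
Local Open Scope ring_scope.

Section Defs.
Variable R : realType.

Definition bvec (n : nat) := {ffun 'I_n -> bool}.

Definition rvec n (x : bvec n) : 'cV[R]_n := \col_i ((x i)%:R).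

Definition objf n (Q : 'M[R]_n) (c : 'cV[R]_n) (x : 'cV[R]_n) : R :=
  (x^T *m (Q *m x)) 0 0 + (c^T *m x) 0 0.

Definition feasible n m1 m2 (A : 'M[R]_(m1, n)) (b : 'cV[R]_m1)
  (B : 'M[R]_(m2, n)) (d : 'cV[R]_m2) (x : 'cV[R]_n) : Prop :=
  (forall i, b i 0 <= (A *m x) i 0) /\ B *m x = d.

Definition is_optimizer n m1 m2 (Q : 'M[R]_n) (c : 'cV[R]_n)
  (A : 'M[R]_(m1, n)) (b : 'cV[R]_m1) (B : 'M[R]_(m2, n)) (d : 'cV[R]_m2)
  (xs : bvec n) : Prop :=
  feasible A b B d (rvec xs) /\
  forall x : bvec n, feasible A b B d (rvec x) -> objf Q c (rvec xs) <= objf Q c (rvec x).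

Definition dist1 n (x y : bvec n) : R := \sum_i `|((x i)%:R - (y i)%:R : R)|.

Definition bern n (p : 'I_n -> R) (x : bvec n) : R :=
  \prod_i (if x i then p i else 1 - p i).

Definition mu_of n (p : 'I_n -> R) (xs : bvec n) : R :=
  \sum_(x : bvec n) bern p x * dist1 x xs.

Definition joint n k (p : 'I_n -> R) (X : {ffun 'I_k -> bvec n}) : R :=
  \prod_l bern p (X l).

Definition psi n k (Q : 'M[R]_n) (c : 'cV[R]_n) (p : 'I_n -> R) (xs : bvec n)
  (delta : R) : R :=
  \sum_(X : {ffun 'I_k -> bvec n} |
          [exists l, objf Q c (rvec (X l)) <= objf Q c (rvec xs) + delta])
     joint p X.

Definition lipschitz1 n (Q : 'M[R]_n) (c : 'cV[R]_n) (L : R) : Prop :=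
  forall x y : bvec n, `|objf Q c (rvec x) - objf Q c (rvec y)| <= L * dist1 x y.

End Defs.

(* The objective is L-Lipschitz for the 1-norm, so a sample X misses the
   delta-window around f(xs) only if its Hamming distance D to xs exceeds
   t = delta / L.  D is a sum of independent Bernoulli variables with mean mu,
   so Chernoff's bound with the exponential moment E[exp(s D)] <=
   exp(mu (e^s - 1)) at s = ln(t/mu) gives Pr(D > t) <= exp(t (1 - ln(t/mu)) - mu).
   The k samples are independent, hence psi = 1 - Pr(miss)^k. *)
From HB Require Import structures.
From mathcomp Require Import all_boot all_order all_algebra.
From mathcomp Require Import reals sequences exp.
From mathcomp Require Import ring.
Import Order.TTheory GRing.Theory Num.Theory.
Set Implicit Arguments. Unset Strict Implicit.
Local Open Scope ring_scope.

Lemma expR_ge1 (R : realType) (x : R) : 0 <= x -> 1 <= expR x.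
Proof. by move=> x0; apply: le_trans (expR_ge1Dx x); rewrite lerDl. Qed.

Section BernoulliVectors.
Variables (R : realType) (n : nat) (p : 'I_n -> R).

Lemma sum_bvec_prod (g : 'I_n -> bool -> R) :
  \sum_(x : bvec n) \prod_i g i (x i) = \prod_i (g i true + g i false).
Proof.
transitivity (\prod_i \sum_b g i b); first by rewrite bigA_distr_bigA.
by apply: eq_bigr => i _; rewrite big_bool.
Qed.

Lemma sum_bern : \sum_(x : bvec n) bern p x = 1.
Proof.
rewrite (sum_bvec_prod (fun i b => if b then p i else 1 - p i)).
by apply: big1 => i _; rewrite addrC subrK.
Qed.

Lemma normr_bool_sub (a b : bool) : `|(a%:R - b%:R : R)| = (a != b)%:R.
Proof. by case: a; case: b; rewrite /= ?subrr ?normr0 ?subr0 ?sub0r ?normrN ?normr1. Qed.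

Definition mismatch_prob (xs : bvec n) i : R := if xs i then 1 - p i else p i.

Lemma mu_ofE xs : mu_of p xs = \sum_i mismatch_prob xs i.
Proof.
rewrite /mu_of; under eq_bigr => x _ do rewrite /dist1 big_distrr /=.
rewrite exchange_big /=; apply: eq_bigr => i _.
pose g j (b : bool) := (if b then p j else 1 - p j) *
                       (if j == i then (b != xs j)%:R else 1).
have single_factor j : j != i -> g j true + g j false = 1.
  by move=> /negbTE ji; rewrite /g ji !mulr1 addrC subrK.
rewrite (eq_bigr (fun x : bvec n => \prod_j g j (x j))); last first.
  move=> x _; rewrite big_split /= normr_bool_sub [X in _ = _ * X](bigD1 i) //= eqxx.
  by rewrite [\prod_(j < n | j != i) _]big1 ?mulr1 // => j /negbTE ->.
rewrite sum_bvec_prod (bigD1 i) //= big1 ?mulr1; last exact: single_factor.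
by rewrite /g /mismatch_prob eqxx; case: (xs i) => /=; rewrite ?mulr0 ?mulr1 ?add0r ?addr0.
Qed.

Hypothesis p01 : forall i, 0 <= p i <= 1.

Lemma bern_ge0 x : 0 <= bern p x.
Proof.
apply: prodr_ge0 => i _; have /andP[p0 p1] := p01 i.
by case: (x i); rewrite ?subr_ge0.
Qed.

Lemma sum_bern_le1 (P : pred (bvec n)) : \sum_(x | P x) bern p x <= 1.
Proof.
rewrite -sum_bern [leRHS](bigID P) /= lerDl.
by apply: sumr_ge0 => x _; exact: bern_ge0.
Qed.

Lemma mu_of_ge0 xs : 0 <= mu_of p xs.
Proof.
rewrite mu_ofE; apply: sumr_ge0 => i _; have /andP[p0 p1] := p01 i.
by rewrite /mismatch_prob; case: (xs i); rewrite ?subr_ge0.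
Qed.

(* Coordinatewise, 1 + r (e^s - 1) <= exp (r (e^s - 1)). *)
Lemma mgf_dist1_le xs s :
  \sum_(x : bvec n) bern p x * expR (s * dist1 R x xs)
    <= expR (mu_of p xs * (expR s - 1)).
Proof.
pose g i (b : bool) := (if b then p i else 1 - p i) * expR (s * (b != xs i)%:R).
rewrite (eq_bigr (fun x : bvec n => \prod_i g i (x i))); last first.
  move=> x _; rewrite /dist1 mulr_sumr expR_sum -big_split /=.
  by apply: eq_bigr => i _; rewrite normr_bool_sub.
rewrite sum_bvec_prod mu_ofE mulr_suml expR_sum; apply: ler_prod => i _.
have /andP[p0 p1] := p01 i.
rewrite /g /mismatch_prob; case: (xs i) => /=; rewrite mulr0 mulr1 expR0.
all: apply/andP; split; first by rewrite addr_ge0 ?mulr_ge0 ?expR_ge0 ?subr_ge0.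
all: apply: le_trans (expR_ge1Dx _); rewrite le_eqVlt; apply/predU1P; left; ring.
Qed.

Lemma dist1_tail_le xs t s : 0 <= s ->
  \sum_(x | t < dist1 R x xs) bern p x
    <= expR (mu_of p xs * (expR s - 1) - s * t).
Proof.
move=> s0; rewrite expRD -mulNr.
apply: le_trans (ler_wpM2r (expR_ge0 _) (mgf_dist1_le xs s)).
rewrite mulr_suml big_mkcond /=; apply: ler_sum => x _.
rewrite -mulrA -expRD; case: ifP => [tD|_].
  apply: ler_peMr; first exact: bern_ge0.
  by apply: expR_ge1; rewrite mulNr -mulrBr mulr_ge0 // subr_ge0 ltW.
by rewrite mulr_ge0 ?bern_ge0 ?expR_ge0.
Qed.

Lemma dist1_tail_chernoff xs t : 0 < mu_of p xs <= t ->
  \sum_(x | t < dist1 R x xs) bern p x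
    <= expR (t * (1 - ln (t / mu_of p xs)) - mu_of p xs).
Proof.
move=> /andP[mu0 mut]; have tmu_ge1 : 1 <= t / mu_of p xs.
  by rewrite ler_pdivlMr // mul1r.
apply: le_trans (dist1_tail_le xs t (ln_ge0 tmu_ge1)) _.
rewrite lnK ?posrE ?(lt_le_trans ltr01) //.
rewrite le_eqVlt; apply/predU1P; left; congr expR.
by field; rewrite gt_eqF.
Qed.

End BernoulliVectors.

Lemma sum_joint_exists (R : realType) n k (p : 'I_n -> R) (P : pred (bvec n)) :
  \sum_(X : {ffun 'I_k -> bvec n} | [exists l, P (X l)]) joint p X
    = 1 - (\sum_(x : bvec n | ~~ P x) bern p x) ^+ k.
Proof.
have sum_joint : \sum_(X : {ffun 'I_k -> bvec n}) joint p X = 1.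
  rewrite /joint -(bigA_distr_bigA (fun _ : 'I_k => bern p)) /=.
  by rewrite big1 // => l _; rewrite sum_bern.
have all_miss : \sum_(X : {ffun 'I_k -> bvec n} | ~~ [exists l, P (X l)]) joint p X
    = (\sum_(x : bvec n | ~~ P x) bern p x) ^+ k.
  rewrite -[k in _ ^+ k]card_ord -prodr_const.
  rewrite [RHS](eq_bigr (fun=> \sum_x if ~~ P x then bern p x else 0)); last first.
    by move=> l _; rewrite big_mkcond.
  rewrite bigA_distr_bigA big_mkcond /=; apply: eq_bigr => X _.
  case: ifP => [/existsPn noP|/negbFE/existsP[l Pl]].
    by apply: eq_bigr => l _; rewrite noP.
  by rewrite (bigD1 l) //= Pl mul0r.
rewrite -sum_joint [X in _ = X - _](bigID (fun X : {ffun 'I_k -> bvec n} =>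
  [exists l, P (X l)])) /=.
by rewrite all_miss addrK.
Qed.

Lemma lipschitz1_dist1_gt (R : realType) n (Q : 'M[R]_n) c L delta (x xs : bvec n) :
  0 < L -> lipschitz1 Q c L ->
  objf Q c (rvec R xs) + delta < objf Q c (rvec R x) -> delta / L < dist1 R x xs.
Proof.
move=> L0 lipQ miss; rewrite ltr_pdivrMr // mulrC.
apply: lt_le_trans (le_trans (ler_norm _) (lipQ x xs)).
by rewrite ltrBrDr addrC.
Qed.

(* When mu = 0 the term ln (delta / 0) is
   ln 0 = 0, and the bound degenerates to the trivial 1 - exp (k delta / L). *)
Theorem mainTheorem6 (R : realType) (n m1 m2 k : nat)
  (Q : 'M[R]_n) (c : 'cV[R]_n)
  (A : 'M[R]_(m1, n)) (b : 'cV[R]_m1) (B : 'M[R]_(m2, n)) (d : 'cV[R]_m2)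
  (p : 'I_n -> R) (xs : bvec n) (delta L : R) :
  (forall i, 0 <= p i <= 1) ->
  is_optimizer Q c A b B d xs ->
  0 < delta ->
  0 < L -> lipschitz1 Q c L ->
  mu_of p xs <= delta / L ->
  psi k Q c p xs delta >=
    1 - expR (k%:R * (delta / L * (1 - ln (delta / (mu_of p xs * L))) - mu_of p xs)).
Proof.
move=> p01 _ delta0 L0 lipQ mu_le.
rewrite /psi (@sum_joint_exists R n k p
  (fun x => objf Q c (rvec R x) <= objf Q c (rvec R xs) + delta)).
rewrite lerD2l lerN2 expRM_natl.
set miss := \sum_(x | _) _; set mu := mu_of p xs; set t := delta / L.
have miss_ge0 : 0 <= miss by apply: sumr_ge0 => x _; exact: bern_ge0.
apply: lerXn2r; rewrite ?nnegrE ?expR_ge0 //.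
have [mu0|mu_gt0] := eqVneq mu 0.
  rewrite mu0 mul0r invr0 mulr0 ln0 // !subr0 mulr1.
  by rewrite (le_trans (sum_bern_le1 p01 _)) // expR_ge1 // ltW // divr_gt0.
have mu_pos : 0 < mu by rewrite lt_neqAle eq_sym mu_gt0 mu_of_ge0.
have -> : delta / (mu * L) = t / mu by rewrite /t; field; rewrite !gt_eqF.
apply: le_trans (dist1_tail_chernoff p01 (xs:=xs) _); last by rewrite mu_pos.
rewrite /miss [leRHS]big_mkcond [leLHS]big_mkcond /=; apply: ler_sum => x _.
case: ifPn => [miss_x|_]; last by case: ifP; rewrite ?bern_ge0.
by rewrite (lipschitz1_dist1_gt L0 lipQ) // ltNge.
Qed.
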